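(* Fix a real number $\beta>-1$ and let $\phi$ be an analytic self-map of $\mathbb{D}$ such that the composition operator $C_\phi f=f\circ\phi$ is complex symmetric on $A^2_\beta$. Then neither $C_\phi$ nor $C_\phi^*$ is hypercyclic.
   Context: $\mathbb{D}$ is the open unit disc. For $\beta>-1$, $A^2_\beta$ is the Hilbert space of analytic functions $f(z)=\sum_{n\ge0}\widehat f(n)z^n$ on $\mathbb{D}$ with inner product $\langle f,g\rangle=\sum_{n\ge0}\frac{n!\,\Gamma(2+\beta)}{\Gamma(n+2+\beta)}\widehat f(n)\overline{\widehat g(n)}$ (equivalently the $L^2$ inner product with respect to $(\beta+1)(1-|z|^2)^\beta dA(z)$). A conjugation is a conjugate-linear map $C$ with $C^2=I$ and $\langle Cf,Cg\rangle=\langle g,f\rangle$; a bounded operator $T$ is complex symmetric if $CT=T^*C$ for some conjugation $C$. An operator $T$ on a Hilbert space $\mathcal H$ is hypercyclic if there is $f\in\mathcal H$ whose orbit $\{T^nf:n\ge0\}$ is dense in $\mathcal H$. *)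

From Stdlib Require Import Reals ClassicalEpsilon Arith Factorial.
From Coquelicot Require Import Coquelicot.
Open Scope R_scope.

Definition Disc : Type := {z : C | Cmod z < 1}.
Definition dval (z : Disc) : C := proj1_sig z.

Definition analytic (f : Disc -> C) : Prop :=
  forall z0 : Disc, exists r : R, 0 < r /\ exists c : nat -> C,
    forall z : Disc, Cmod (Cminus (dval z) (dval z0)) < r ->
      is_series (V := C_NormedModule)
        (fun n => Cmult (c n) (Cpow (Cminus (dval z) (dval z0)) n)) (f z).

Definition taylor0 (f : Disc -> C) (a : nat -> C) : Prop :=
  exists r : R, 0 < r /\
    forall z : Disc, Cmod (dval z) < r ->
      is_series (V := C_NormedModule) (fun n => Cmult (a n) (Cpow (dval z) n)) (f z).

Definition coef (f : Disc -> C) : nat -> C :=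
  epsilon (inhabits (fun _ : nat => (0%R, 0%R) : C)) (taylor0 f).

Fixpoint poch (b : R) (n : nat) : R :=
  match n with
  | O => 1
  | S m => poch b m * (b + INR m)
  end.

(** weight n! Gamma(2+beta) / Gamma(n+2+beta) = n! / (2+beta)_n *)
Definition weight (beta : R) (n : nat) : R := INR (Factorial.fact n) / poch (2 + beta) n.

Definition inA2 (beta : R) (f : Disc -> C) : Prop :=
  analytic f /\ ex_series (fun n => weight beta n * (Cmod (coef f n)) ^ 2).

Definition A2term (beta : R) (f g : Disc -> C) (n : nat) : C :=
  Cmult (RtoC (weight beta n)) (Cmult (coef f n) (Cconj (coef g n))).

Definition A2inner (beta : R) (f g : Disc -> C) : C :=
  (Series (fun n => Re (A2term beta f g n)), Series (fun n => Im (A2term beta f g n))).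

Definition A2norm (beta : R) (f : Disc -> C) : R :=
  sqrt (Series (fun n => weight beta n * (Cmod (coef f n)) ^ 2)).

Definition fadd (f g : Disc -> C) : Disc -> C := fun z => Cplus (f z) (g z).
Definition fsub (f g : Disc -> C) : Disc -> C := fun z => Cminus (f z) (g z).
Definition fscal (l : C) (f : Disc -> C) : Disc -> C := fun z => Cmult l (f z).

Definition comp_op (phi : Disc -> Disc) (f : Disc -> C) : Disc -> C := fun z => f (phi z).

Definition conjugation (beta : R) (Cj : (Disc -> C) -> (Disc -> C)) : Prop :=
  (forall f, inA2 beta f -> inA2 beta (Cj f)) /\
  (forall f g, inA2 beta f -> inA2 beta g -> Cj (fadd f g) = fadd (Cj f) (Cj g)) /\
  (forall l f, inA2 beta f -> Cj (fscal l f) = fscal (Cconj l) (Cj f)) /\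
  (forall f, inA2 beta f -> Cj (Cj f) = f) /\
  (forall f g, inA2 beta f -> inA2 beta g ->
     A2inner beta (Cj f) (Cj g) = A2inner beta g f).

Definition adjoint (beta : R) (T S : (Disc -> C) -> (Disc -> C)) : Prop :=
  (forall g, inA2 beta g -> inA2 beta (S g)) /\
  (forall f g, inA2 beta f -> inA2 beta g ->
     A2inner beta (T f) g = A2inner beta f (S g)).

Definition bounded_op (beta : R) (T : (Disc -> C) -> (Disc -> C)) : Prop :=
  (forall f, inA2 beta f -> inA2 beta (T f)) /\
  (forall f g, inA2 beta f -> inA2 beta g -> T (fadd f g) = fadd (T f) (T g)) /\
  (forall l f, inA2 beta f -> T (fscal l f) = fscal l (T f)) /\
  exists M : R, forall f, inA2 beta f -> A2norm beta (T f) <= M * A2norm beta f.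

Definition complex_symmetric (beta : R) (T : (Disc -> C) -> (Disc -> C)) : Prop :=
  bounded_op beta T /\
  exists Cj, conjugation beta Cj /\
  exists S, adjoint beta T S /\
    forall f, inA2 beta f -> Cj (T f) = S (Cj f).

Definition hypercyclic (beta : R) (T : (Disc -> C) -> (Disc -> C)) : Prop :=
  exists f, inA2 beta f /\
    forall g, inA2 beta g -> forall eps : R, 0 < eps ->
      exists n : nat, A2norm beta (fsub (Nat.iter n T f) g) < eps.

From Stdlib Require Import Reals Lra FunctionalExtensionality ClassicalEpsilon.
From Coquelicot Require Import Coquelicot.

(** The constant function [1] is fixed by [C_phi], so for every adjoint [S]
    of [C_phi] the functional [f |-> hat f(0) = conj <1, f>] is [S]-invariant.
    If moreover [J C_phi = S J] for a conjugation [J], then [f |-> hat (J f)(0)]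
    is [C_phi]-invariant.  Both functionals are additive, onto [C] and bounded by
    the norm ([|hat f(0)| <= ||f||] and [J] is isometric), so an orbit on which
    one of them is constant stays at distance [>= 1] from any [g] where its value
    differs by [1]: no orbit is dense. *)

Lemma is_series_Re_Im (u : nat -> C) (l : C) :
  is_series (V := C_NormedModule) u l ->
  is_series (fun n => Re (u n)) (Re l) /\ is_series (fun n => Im (u n)) (Im l).
Proof.
  unfold is_series; intros Hu.
  assert (Hsum : forall N,
    sum_n u N = (sum_n (fun n => Re (u n)) N, sum_n (fun n => Im (u n)) N)).
  { induction N as [|N IH].
    - rewrite !sum_O. apply surjective_pairing.
    - rewrite !sum_Sn, IH. reflexivity. }
  split.
  - apply (filterlim_ext (fun N => Re (sum_n u N))); [intros N; now rewrite Hsum|].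
    eapply filterlim_comp; [exact Hu|]. intros P [eps HP]. exists eps.
    intros y [Hy _]. exact (HP _ Hy).
  - apply (filterlim_ext (fun N => Im (sum_n u N))); [intros N; now rewrite Hsum|].
    eapply filterlim_comp; [exact Hu|]. intros P [eps HP]. exists eps.
    intros y [_ Hy]. exact (HP _ Hy).
Qed.

Lemma is_series_single {K : AbsRing} {V : NormedModule K} (u : nat -> V) :
  (forall k, u (S k) = zero) -> is_series u (u O).
Proof.
  intros Hu. unfold is_series.
  eapply filterlim_ext; [|apply filterlim_const].
  induction x as [|N IH]; simpl.
  - now rewrite sum_O.
  - now rewrite sum_Sn, <- IH, Hu, plus_zero_r.
Qed.

Lemma Series_single (u : nat -> R) : (forall k, u (S k) = 0) -> Series u = u O.
Proof. intros Hu. now apply is_series_unique, (is_series_single (V := R_NormedModule)). Qed.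

Lemma Cmod_RtoC_0_lt_1 : Cmod (RtoC 0) < 1.
Proof. rewrite Cmod_0. lra. Qed.

Definition disc0 : Disc := exist _ (RtoC 0) Cmod_RtoC_0_lt_1.

(* Junk value [disc0] when [|x| >= 1]. *)
Definition disc_of_real (x : R) : Disc :=
  match Rlt_dec (Cmod (RtoC x)) 1 with
  | left h => exist _ (RtoC x) h
  | right _ => disc0
  end.

Lemma dval_disc_of_real (x : R) : Rabs x < 1 -> dval (disc_of_real x) = RtoC x.
Proof.
  intros Hx. unfold disc_of_real. destruct Rlt_dec as [h|h]; [reflexivity|].
  rewrite Cmod_R in h. contradiction.
Qed.

Lemma taylor0_real_pseries (f : Disc -> C) (a : nat -> C) :
  taylor0 f a -> exists r, 0 < r /\ forall x, Rabs x < r ->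
    is_pseries (fun n => Re (a n)) x (Re (f (disc_of_real x))) /\
    is_pseries (fun n => Im (a n)) x (Im (f (disc_of_real x))).
Proof.
  intros [r [Hr Ha]]. exists (Rmin r 1). split; [apply Rmin_pos; lra|].
  intros x Hx.
  assert (Hx1 : Rabs x < 1) by (eapply Rlt_le_trans; [exact Hx|apply Rmin_r]).
  assert (Hxr : Rabs x < r) by (eapply Rlt_le_trans; [exact Hx|apply Rmin_l]).
  assert (Hs := Ha (disc_of_real x)).
  rewrite dval_disc_of_real, Cmod_R in Hs by exact Hx1.
  destruct (is_series_Re_Im _ _ (Hs Hxr)) as [HRe HIm].
  split; apply is_pseries_R; eapply is_series_ext; try eassumption;
    intros n; simpl; rewrite <- RtoC_pow.
  - apply re_scal_r.
  - apply im_scal_r.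
Qed.

Lemma CV_radius_pos_of_is_pseries (u : nat -> R) (r : R) (F : R -> R) :
  0 < r -> (forall x, Rabs x < r -> is_pseries u x (F x)) -> Rbar_lt 0 (CV_radius u).
Proof.
  intros Hr Hu.
  destruct (Rbar_lt_le_dec 0 (CV_radius u)) as [h|h]; [exact h|exfalso].
  assert (Hr2 : Rabs (r / 2) = r / 2) by (apply Rabs_pos_eq; lra).
  apply (CV_disk_outside u (r / 2)).
  - eapply Rbar_le_lt_trans; [exact h|]. simpl. lra.
  - apply ex_series_lim_0. exists (F (r / 2)). apply is_pseries_R, Hu. lra.
Qed.

Lemma is_pseries_coef_unique (u v : nat -> R) (r : R) (F : R -> R) : 0 < r ->
  (forall x, Rabs x < r -> is_pseries u x (F x)) ->
  (forall x, Rabs x < r -> is_pseries v x (F x)) -> u = v.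
Proof.
  intros Hr Hu Hv. apply functional_extensionality. intros n.
  apply PSeries_ext_recip;
    [eapply CV_radius_pos_of_is_pseries; eauto ..|].
  exists (mkposreal r Hr). intros y Hy.
  assert (Hyr : Rabs y < r).
  { unfold ball in Hy; simpl in Hy. unfold AbsRing_ball, abs, minus, plus, opp in Hy.
    simpl in Hy. now rewrite Ropp_0, Rplus_0_r in Hy. }
  now rewrite (is_pseries_unique _ _ _ (Hu y Hyr)), (is_pseries_unique _ _ _ (Hv y Hyr)).
Qed.

Lemma taylor0_unique (f : Disc -> C) (a b : nat -> C) :
  taylor0 f a -> taylor0 f b -> a = b.
Proof.
  intros Ha Hb.
  destruct (taylor0_real_pseries _ _ Ha) as [ra [Hra Pa]].
  destruct (taylor0_real_pseries _ _ Hb) as [rb [Hrb Pb]].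
  assert (Hr : 0 < Rmin ra rb) by now apply Rmin_pos.
  assert (Hla : forall x, Rabs x < Rmin ra rb -> Rabs x < ra)
    by (intros; eapply Rlt_le_trans; [eassumption|apply Rmin_l]).
  assert (Hlb : forall x, Rabs x < Rmin ra rb -> Rabs x < rb)
    by (intros; eapply Rlt_le_trans; [eassumption|apply Rmin_r]).
  assert (ERe := is_pseries_coef_unique _ _ _ _ Hr
    (fun x h => proj1 (Pa x (Hla x h))) (fun x h => proj1 (Pb x (Hlb x h)))).
  assert (EIm := is_pseries_coef_unique _ _ _ _ Hr
    (fun x h => proj2 (Pa x (Hla x h))) (fun x h => proj2 (Pb x (Hlb x h)))).
  apply functional_extensionality. intros n.
  apply (f_equal (fun s => s n)) in ERe, EIm. simpl in ERe, EIm.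
  now apply injective_projections.
Qed.

Lemma coef_taylor0 (f : Disc -> C) (a : nat -> C) : taylor0 f a -> coef f = a.
Proof.
  intros Ha. apply (taylor0_unique f); [|exact Ha].
  unfold coef. apply epsilon_spec. now exists a.
Qed.

Lemma taylor0_analytic (f : Disc -> C) : analytic f -> taylor0 f (coef f).
Proof.
  intros Hf. destruct (Hf disc0) as [r [Hr [c Hc]]].
  assert (Hc0 : taylor0 f c).
  { exists r. split; [exact Hr|]. intros z Hz.
    assert (E : Cminus (dval z) (dval disc0) = dval z) by (simpl; ring).
    rewrite <- E. apply Hc. now rewrite E. }
  now rewrite (coef_taylor0 f c Hc0).
Qed.

Lemma is_series_sub_coef (a b p : nat -> C) (la lb : C) :
  is_series (V := C_NormedModule) (fun n => Cmult (a n) (p n)) la ->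
  is_series (V := C_NormedModule) (fun n => Cmult (b n) (p n)) lb ->
  is_series (V := C_NormedModule)
    (fun n => Cmult (Cminus (a n) (b n)) (p n)) (Cminus la lb).
Proof.
  intros Ha Hb. eapply is_series_ext; [|exact (is_series_minus _ _ _ _ Ha Hb)].
  intros n. change (Cplus (Cmult (a n) (p n)) (Copp (Cmult (b n) (p n)))
    = Cmult (Cminus (a n) (b n)) (p n)). ring.
Qed.

Lemma analytic_fsub (f g : Disc -> C) : analytic f -> analytic g -> analytic (fsub f g).
Proof.
  intros Hf Hg z0.
  destruct (Hf z0) as [r1 [Hr1 [a Ha]]], (Hg z0) as [r2 [Hr2 [b Hb]]].
  exists (Rmin r1 r2). split; [now apply Rmin_pos|].
  exists (fun n => Cminus (a n) (b n)). intros z Hz.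
  apply is_series_sub_coef; [apply Ha | apply Hb];
    eapply Rlt_le_trans; [exact Hz|apply Rmin_l|exact Hz|apply Rmin_r].
Qed.

Lemma taylor0_fsub (f g : Disc -> C) (a b : nat -> C) : taylor0 f a -> taylor0 g b ->
  taylor0 (fsub f g) (fun n => Cminus (a n) (b n)).
Proof.
  intros [r1 [Hr1 Ha]] [r2 [Hr2 Hb]].
  exists (Rmin r1 r2). split; [now apply Rmin_pos|]. intros z Hz.
  apply is_series_sub_coef; [apply Ha | apply Hb];
    eapply Rlt_le_trans; [exact Hz|apply Rmin_l|exact Hz|apply Rmin_r].
Qed.

Lemma coef_fsub (f g : Disc -> C) : analytic f -> analytic g ->
  coef (fsub f g) = fun n => Cminus (coef f n) (coef g n).
Proof.
  intros Hf Hg. apply coef_taylor0, taylor0_fsub; now apply taylor0_analytic.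
Qed.

Lemma Cmod_sub_sqr_le (a b : C) : Cmod (Cminus a b) ^ 2 <= 2 * Cmod a ^ 2 + 2 * Cmod b ^ 2.
Proof.
  pose proof (Cmod_triangle a (Copp b)) as Htri. rewrite Cmod_opp in Htri.
  pose proof (Cmod_ge_0 (Cminus a b)). pose proof (Cmod_ge_0 a). pose proof (Cmod_ge_0 b).
  change (Cplus a (Copp b)) with (Cminus a b) in Htri.
  assert (Cmod (Cminus a b) * Cmod (Cminus a b) <= (Cmod a + Cmod b) * (Cmod a + Cmod b))
    by (apply Rmult_le_compat; lra).
  pose proof (pow2_ge_0 (Cmod a - Cmod b)). nra.
Qed.

Lemma poch_pos (b : R) (n : nat) : 0 < b -> 0 < poch b n.
Proof.
  intros Hb. induction n as [|n IH]; simpl; [lra|].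
  pose proof (pos_INR n). apply Rmult_lt_0_compat; lra.
Qed.

Lemma weight_pos (beta : R) (n : nat) : -1 < beta -> 0 < weight beta n.
Proof.
  intros Hb. apply Rdiv_lt_0_compat.
  - apply lt_0_INR, Factorial.lt_O_fact.
  - apply poch_pos. lra.
Qed.

Lemma weight0 (beta : R) : weight beta 0 = 1.
Proof. unfold weight. simpl. lra. Qed.

Lemma inA2_fsub (beta : R) (f g : Disc -> C) : -1 < beta ->
  inA2 beta f -> inA2 beta g -> inA2 beta (fsub f g).
Proof.
  intros Hb [Af Ef] [Ag Eg]. split; [now apply analytic_fsub|].
  rewrite coef_fsub by assumption.
  apply (ex_series_le (V := R_CompleteNormedModule) _
    (fun n => 2 * (weight beta n * Cmod (coef f n) ^ 2)
            + 2 * (weight beta n * Cmod (coef g n) ^ 2))).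
  - intros n. pose proof (weight_pos beta n Hb).
    pose proof (Cmod_sub_sqr_le (coef f n) (coef g n)).
    change (Rabs (weight beta n * Cmod (Cminus (coef f n) (coef g n)) ^ 2)
      <= 2 * (weight beta n * Cmod (coef f n) ^ 2)
       + 2 * (weight beta n * Cmod (coef g n) ^ 2)).
    rewrite Rabs_pos_eq by (apply Rmult_le_pos; [lra|apply pow2_ge_0]). nra.
  - apply (ex_series_plus (V := R_NormedModule));
      now apply (ex_series_scal (V := R_NormedModule)).
Qed.

Definition cst (m : C) : Disc -> C := fun _ => m.

Definition cst_coef (m : C) (n : nat) : C := match n with O => m | S _ => RtoC 0 end.

Lemma is_series_cst_coef (m w : C) :
  is_series (V := C_NormedModule) (fun n => Cmult (cst_coef m n) (Cpow w n)) m.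
Proof.
  pose proof (is_series_single (V := C_NormedModule)
    (fun n => Cmult (cst_coef m n) (Cpow w n))) as H; cbv beta in H.
  replace (Cmult (cst_coef m 0) (Cpow w 0)) with m in H by (simpl; ring).
  apply H. intros k. change (Cmult (RtoC 0) (Cpow w (S k)) = RtoC 0). ring.
Qed.

Lemma analytic_cst (m : C) : analytic (cst m).
Proof.
  intros z0. exists 1. split; [lra|]. exists (cst_coef m). intros z _.
  apply is_series_cst_coef.
Qed.

Lemma coef_cst (m : C) : coef (cst m) = cst_coef m.
Proof. apply coef_taylor0. exists 1. split; [lra|]. intros z _. apply is_series_cst_coef. Qed.

Lemma inA2_cst (beta : R) (m : C) : inA2 beta (cst m).
Proof.
  split; [apply analytic_cst|]. rewrite coef_cst. eexists. apply is_series_single.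
  intros k. simpl. rewrite Cmod_0. change (weight beta (S k) * 0 ^ 2 = 0). ring.
Qed.

Lemma coef0_le_A2norm (beta : R) (f : Disc -> C) : -1 < beta -> inA2 beta f ->
  Cmod (coef f 0) <= A2norm beta f.
Proof.
  intros Hb [_ Ef]. unfold A2norm.
  set (u := fun n => weight beta n * Cmod (coef f n) ^ 2) in *.
  assert (Htail : 0 <= Series (fun k => u (S k))).
  { rewrite <- (Series_single (fun _ => 0)) by reflexivity.
    apply Series_le; [|exact (proj1 (ex_series_incr_1 u) Ef)].
    intros n. split; [lra|]. apply Rmult_le_pos; [apply Rlt_le, weight_pos, Hb|apply pow2_ge_0]. }
  rewrite (Series_incr_1 _ Ef). unfold u at 1. rewrite weight0, Rmult_1_l.
  rewrite <- (sqrt_pow2 (Cmod (coef f 0))) at 1 by apply Cmod_ge_0.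
  apply sqrt_le_1_alt. lra.
Qed.

Lemma A2inner_cst1_l (beta : R) (f : Disc -> C) :
  A2inner beta (cst (RtoC 1)) f = Cconj (coef f 0).
Proof.
  unfold A2inner, A2term. rewrite coef_cst, !Series_single.
  - rewrite weight0. apply injective_projections; simpl; ring.
  - intros k. simpl. ring.
  - intros k. simpl. ring.
Qed.

Lemma A2norm_sqrt_inner (beta : R) (f : Disc -> C) :
  A2norm beta f = sqrt (Re (A2inner beta f f)).
Proof.
  unfold A2norm. f_equal. apply Series_ext. intros n.
  unfold A2term. rewrite <- Cmod2_conj, re_scal_l. reflexivity.
Qed.

Section Conjugation.

Variables (beta : R) (J : (Disc -> C) -> Disc -> C).
Hypothesis (Hbeta : -1 < beta) (HJ : conjugation beta J).

Lemma conjugation_A2norm (f : Disc -> C) : inA2 beta f -> A2norm beta (J f) = A2norm beta f.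
Proof.
  destruct HJ as [_ [_ [_ [_ Hinner]]]]. intros Hf.
  now rewrite !A2norm_sqrt_inner, Hinner.
Qed.

Lemma conjugation_fsub (f g : Disc -> C) : inA2 beta f -> inA2 beta g ->
  J (fsub f g) = fsub (J f) (J g).
Proof.
  destruct HJ as [_ [Hadd _]]. intros Hf Hg.
  assert (E : fadd (fsub f g) g = f)
    by (apply functional_extensionality; intros z; unfold fadd, fsub; ring).
  pose proof (Hadd _ _ (inA2_fsub _ _ _ Hbeta Hf Hg) Hg) as H. rewrite E in H.
  apply functional_extensionality. intros z. apply (f_equal (fun F => F z)) in H.
  unfold fadd, fsub in *. rewrite H. ring.
Qed.

End Conjugation.

Definition dominated_onto_functional (beta : R) (L : (Disc -> C) -> C) : Prop :=
  (forall f g, inA2 beta f -> inA2 beta g -> L (fsub f g) = Cminus (L f) (L g)) /\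
  (forall f, inA2 beta f -> Cmod (L f) <= A2norm beta f) /\
  (forall c, exists g, inA2 beta g /\ L g = c).

Lemma coef0_dominated_onto (beta : R) : -1 < beta ->
  dominated_onto_functional beta (fun f => coef f 0).
Proof.
  intros Hb. split; [|split].
  - intros f g [Af _] [Ag _]. now rewrite coef_fsub.
  - intros f Hf. now apply coef0_le_A2norm.
  - intros c. exists (cst c). split; [apply inA2_cst|]. now rewrite coef_cst.
Qed.

Lemma conjugation_dominated_onto (beta : R) (J : (Disc -> C) -> Disc -> C) :
  -1 < beta -> conjugation beta J -> dominated_onto_functional beta (fun f => coef (J f) 0).
Proof.
  intros Hb HJ. pose proof HJ as [HJA2 [_ [_ [HJJ _]]]].
  destruct (coef0_dominated_onto beta Hb) as [Hsub [Hle Honto]].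
  split; [|split].
  - intros f g Hf Hg. rewrite (conjugation_fsub beta J Hb HJ) by assumption.
    now apply Hsub; apply HJA2.
  - intros f Hf. rewrite <- (conjugation_A2norm beta J HJ) by exact Hf.
    now apply Hle, HJA2.
  - intros c. destruct (Honto c) as [g [Hg Hgc]].
    exists (J g). split; [now apply HJA2|]. now rewrite HJJ.
Qed.

Lemma not_hypercyclic_of_invariant_functional (beta : R)
    (T : (Disc -> C) -> Disc -> C) (L : (Disc -> C) -> C) :
  -1 < beta -> dominated_onto_functional beta L ->
  (forall f, inA2 beta f -> inA2 beta (T f)) ->
  (forall f, inA2 beta f -> L (T f) = L f) ->
  ~ hypercyclic beta T.
Proof.
  intros Hb [Hsub [Hle Honto]] HT HLT [f [Hf Hdense]].
  assert (Horbit : forall n, inA2 beta (Nat.iter n T f) /\ L (Nat.iter n T f) = L f).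
  { induction n as [|n [Hn HLn]]; [easy|]. simpl. split; [now apply HT|].
    now rewrite HLT. }
  destruct (Honto (Cplus (L f) (RtoC 1))) as [g [Hg HLg]].
  destruct (Hdense g Hg 1 Rlt_0_1) as [n Hn].
  destruct (Horbit n) as [Hfn HLfn].
  assert (Hdist : 1 <= A2norm beta (fsub (Nat.iter n T f) g)).
  { eapply Rle_trans; [|apply Hle, inA2_fsub; assumption].
    rewrite Hsub, HLfn, HLg by assumption.
    replace (Cminus (L f) (Cplus (L f) (RtoC 1))) with (Copp (RtoC 1)) by ring.
    rewrite Cmod_opp, Cmod_1. lra. }
  lra.
Qed.

Lemma adjoint_coef0_invariant (beta : R) (T S : (Disc -> C) -> Disc -> C) :
  T (cst (RtoC 1)) = cst (RtoC 1) -> adjoint beta T S ->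
  forall g, inA2 beta g -> coef (S g) 0 = coef g 0.
Proof.
  intros HT1 [_ HTS] g Hg.
  pose proof (HTS _ _ (inA2_cst beta (RtoC 1)) Hg) as H.
  rewrite HT1, !A2inner_cst1_l in H.
  now rewrite <- (Cconj_conj (coef (S g) 0)), <- H, Cconj_conj.
Qed.

Theorem proposition3p2 (beta : R) (phi : Disc -> Disc) :
  -1 < beta ->
  analytic (fun z => dval (phi z)) ->
  complex_symmetric beta (comp_op phi) ->
  ~ hypercyclic beta (comp_op phi) /\
  (forall S, adjoint beta (comp_op phi) S -> ~ hypercyclic beta S).
Proof.
  intros Hb _ [[HT _] [J [HJ [S0 [HS0 HJT]]]]].
  assert (Hfix1 : comp_op phi (cst (RtoC 1)) = cst (RtoC 1)) by reflexivity.
  split.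
  - apply (not_hypercyclic_of_invariant_functional beta _ (fun f => coef (J f) 0) Hb);
      [now apply conjugation_dominated_onto | exact HT |].
    intros f Hf. rewrite HJT by exact Hf.
    apply (adjoint_coef0_invariant beta _ _ Hfix1 HS0), HJ, Hf.
  - intros S HS.
    apply (not_hypercyclic_of_invariant_functional beta _ (fun f => coef f 0) Hb);
      [now apply coef0_dominated_onto | apply HS |].
    exact (adjoint_coef0_invariant beta _ _ Hfix1 HS).
Qed.
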